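(* Let $K$ be a perfect field and let $M/K$ be obtained by strong cluster magnification from $L/K$ through a finite Galois extension $F/K$ of degree $d$. Let $L_1,\dots,L_s$ be the $s=s_K(L)$ distinct fields isomorphic to $L$ over $K$, in some order. Then the tower $K\subseteq L_1\subseteq L_1L_2\subseteq\cdots\subseteq L_1L_2\cdots L_s$ (a cluster tower for $L/K$) has length $l$ if and only if the tower $K\subseteq L_1F\subseteq L_1L_2F\subseteq\cdots\subseteq L_1L_2\cdots L_sF$ (a cluster tower for $M/K$) has length $l$. In that case, if the degree sequence of the first tower is $(a_0,a_1,\dots,a_{l-2})$, then the degree sequence of the second tower is $(da_0,da_1,\dots,da_{l-2})$.
   Context: $\bar K$ is a fixed algebraic closure of $K$; $\tilde E$ denotes the Galois closure in $\bar K$ of a finite extension $E/K$. $M/K$ is obtained by strong cluster magnification from a subextension $L/K$ through a finite Galois extension $F/K$ if $[L:K]>2$, $\tilde L\cap F=K$ and $M=LF$. For $L/K$ with $G=\mathrm{Gal}(\tilde L/K)$, $H=\mathrm{Gal}(\tilde L/L)$, $s_K(L)=[G:N_G(H)]$ is the number of distinct subfields of $\bar K$ isomorphic to $L$ over $K$. Given an ordering $(L_1,\dots,L_s)$ of these fields, the cluster tower is $K\subseteq L_1\subseteq L_1L_2\subseteq\cdots\subseteq L_1\cdots L_s=\tilde L$; its length is the number of distinct fields in the tower, and its degree sequence is the list of degrees over $K$ of the distinct fields of the tower other than $K$, in increasing order. (The distinct fields isomorphic to $M$ over $K$ are exactly the $L_iF$.) *)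

From HB Require Import structures.
From mathcomp Require Import all_boot all_order all_algebra all_fingroup all_field.
Set Implicit Arguments. Unset Strict Implicit. Unset Printing Implicit Defensive.
Import GRing.Theory.
Local Open Scope ring_scope.

Definition perfect_field (K : fieldType) : Prop :=
  [pchar K] =i pred0 \/
  exists2 p : nat, p \in [pchar K] & forall y : K, exists x : K, x ^+ p = y.

Section ClusterDefs.
Variables (K : fieldType) (Om : splittingFieldType K).
(* Om plays the role of (a finite normal piece of) \bar K; subfields of Om
   containing K are the elements of {subfield Om}, and K itself is 1%AS. *)

Definition iso_over_K (L E : {subfield Om}) : Prop :=
  exists f : 'End(Om), kHom 1%VS L f /\ (f @: L)%VS = E.

Definition gal_closure (L : {subfield Om}) : {subfield Om} :=
  \big[(fun A B : {subfield Om} => (A * B)%AS)/1%AS]_(s in 'Gal({:Om} / 1%VS)%g)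
     (s @: L)%AS.

Definition compositum (s : seq {subfield Om}) : {subfield Om} :=
  foldr (fun A B : {subfield Om} => (A * B)%AS) 1%AS s.

Definition cluster_tower (s : seq {subfield Om}) : seq {subfield Om} :=
  [seq compositum (take i s) | i <- iota 0 (size s).+1].

Definition tower_length (t : seq {subfield Om}) : nat := size (undup t).

Definition degree_sequence (t : seq {subfield Om}) : seq nat :=
  sort leq (map (fun E : {subfield Om} => \dim E) [seq E <- undup t | E != 1%AS]).

Definition strong_cluster_magnification (L F M : {subfield Om}) : Prop :=
  [/\ (2 < \dim L)%N, galois 1%VS F, (gal_closure L :&: F)%AS = 1%AS
    & M = (L * F)%AS].

End ClusterDefs.

(* Every field of the first tower lies in the Galois closure N of L.  As F/K
   is Galois and N meets F in K, a primitive element of F keeps its minimal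
   polynomial over any subfield C of N, so [CF : K] = [C : K][F : K].
   Comparing degrees gives CF ∩ N = C, hence C |-> CF is injective on the
   subfields of N.  The second tower is the image of the first under this map
   (with K fixed), so the two towers have the same number of distinct fields
   and the degrees get multiplied by d = [F : K]. *)

From HB Require Import structures.
From mathcomp Require Import all_boot all_order all_algebra all_fingroup all_field.

Set Implicit Arguments. Unset Strict Implicit. Unset Printing Implicit Defensive.
Import GRing.Theory.
Local Open Scope ring_scope.

Lemma undup_map_in (T1 T2 : eqType) (g : T1 -> T2) (s : seq T1) :
  {in s &, injective g} -> undup (map g s) = map g (undup s).
Proof.
elim: s => [|x s IHs] //= g_inj.
have g_inj_s : {in s &, injective g}.
  by move=> a b a_s b_s; apply: g_inj; rewrite inE ?a_s ?b_s orbT.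
have -> : (g x \in map g s) = (x \in s).
  apply/mapP/idP => [[y ys /g_inj gxy]|xs]; last by exists x.
  by rewrite gxy ?inE ?eqxx ?ys ?orbT.
by case: (x \in s); rewrite /= IHs.
Qed.

Section Compositum.

Variables (K : fieldType) (Om : splittingFieldType K).
Implicit Types (C D E F L N : {subfield Om}) (s : seq {subfield Om}).

Lemma minPoly_disjoint_galois (K0 : {subfield Om}) E F a :
  (K0 <= E)%VS -> galois K0 F -> (E :&: F)%VS = K0 -> a \in F ->
  minPoly E a = minPoly K0 a.
Proof.
move=> sK0E galF capEF Fa; have sK0F : (K0 <= F)%VS by case/and3P: galF.
have dvd_mE : minPoly E a %| minPoly K0 a by apply: minPolyS.
have [r [_ _ def_mK0]] := (elimT (galois_factors sK0F)) galF a Fa.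
have mE_over_F : minPoly E a \is a polyOver F.
  move: dvd_mE; rewrite def_mK0 => /dvdp_prod_XsubC[m].
  rewrite eqp_monic ?monic_minPoly ?monic_prod_XsubC // => /eqP->.
  rewrite big_seq; apply: rpred_prod => b /mem_mask /mapP[x _ ->].
  by rewrite polyOverXsubC memv_gal.
have mE_over_K0 : minPoly E a \is a polyOver K0.
  rewrite -capEF; apply/polyOverP => i; rewrite memv_cap.
  by rewrite (polyOverP mE_over_F) (polyOverP (minPolyOver E a)).
have dvd_mK0 : minPoly K0 a %| minPoly E a.
  by apply: minPoly_dvdp mE_over_K0 (root_minPoly E a).
by apply/eqP; rewrite -eqp_monic ?monic_minPoly // /eqp dvd_mE dvd_mK0.
Qed.

Lemma dim_prodv_galois (K0 : {subfield Om}) E F :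
  (K0 <= E)%VS -> galois K0 F -> (E :&: F)%VS = K0 ->
  (\dim (E * F) * \dim K0 = \dim E * \dim F)%N.
Proof.
move=> sK0E galF capEF; have sK0F : (K0 <= F)%VS by case/and3P: galF.
set a := separable_generator K0 F.
have Fa : a \in F by apply: separable_generator_mem.
have defF : F = <<K0; a>>%VS :> {vspace Om}.
  by apply: eq_adjoin_separable_generator; case/and3P: galF.
have defEF : (E * F)%VS = <<E; a>>%VS.
  apply/eqP; rewrite eqEsubv; apply/andP; split.
    by apply: prodv_sub; rewrite ?subv_adjoin // defF adjoinSl.
  apply/FadjoinP; split; first exact: field_subvMr.
  exact: subvP (field_subvMl E F) _ Fa.
have deg_a : adjoin_degree E a = adjoin_degree K0 a.
  apply: succn_inj.
  by rewrite -!size_minPoly (minPoly_disjoint_galois sK0E galF capEF Fa).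
by rewrite defEF defF !dim_Fadjoin deg_a mulnAC mulnC.
Qed.

Lemma disjoint_capvSl (K0 : {subfield Om}) C F N :
  (K0 <= C)%VS -> (K0 <= F)%VS -> (C <= N)%VS -> (N :&: F)%VS = K0 ->
  (C :&: F)%VS = K0.
Proof.
move=> sK0C sK0F sCN capNF; apply/eqP; rewrite eqEsubv -{1}capNF capvS //=.
by rewrite subv_cap sK0C.
Qed.

Lemma prodv_galois_capv (K0 : {subfield Om}) C F N :
  (K0 <= C)%VS -> (C <= N)%VS -> galois K0 F -> (N :&: F)%VS = K0 ->
  (C * F :&: N)%VS = C.
Proof.
move=> sK0C sCN galF capNF.
have sK0F : (K0 <= F)%VS by case/and3P: galF.
have capF D : (K0 <= D)%VS -> (D <= N)%VS -> (D :&: F)%VS = K0.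
  by move=> sK0D sDN; apply: disjoint_capvSl sK0D sK0F sDN capNF.
pose D := (C * F :&: N)%AS.
have sCD : (C <= D)%VS by rewrite subv_cap field_subvMr sCN.
have sDN : (D <= N)%VS by apply: capvSr.
have sK0D := subv_trans sK0C sCD.
have DF_CF : (D * F)%VS = (C * F)%VS.
  apply/eqP; rewrite eqEsubv (prodvSl _ sCD) andbT.
  by apply: (prodv_sub (A := (C * F)%AS)); [apply: capvSl | apply: field_subvMl].
have dimD : \dim D = \dim C.
  apply/eqP; rewrite -(eqn_pmul2r (adim_gt0 F)).
  rewrite -(dim_prodv_galois sK0D galF (capF _ sK0D sDN)).
  by rewrite -(dim_prodv_galois sK0C galF (capF _ sK0C sCN)) DF_CF.
by apply/eqP; rewrite eq_sym eqEdim sCD dimD leqnn.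
Qed.

Lemma sub_big_prodv (I : eqType) (r : seq I) (P : pred I) (Es : I -> {subfield Om}) i :
  i \in r -> P i ->
  (Es i <= \big[(fun A B : {subfield Om} => (A * B)%AS)/1%AS]_(j <- r | P j) Es j)%VS.
Proof.
elim: r => [|j r IHr] //; rewrite inE big_cons => /orP[/eqP<- ->|ri Pi].
  exact: field_subvMr.
case: (P j); last exact: IHr.
exact: subv_trans (IHr ri Pi) (field_subvMl _ _).
Qed.

Lemma subv_compositum s E : E \in s -> (E <= compositum s)%VS.
Proof. by move=> sE; rewrite /compositum foldrE; apply: sub_big_prodv. Qed.

Lemma compositum_subv s D :
  (forall E, E \in s -> (E <= D)%VS) -> (compositum s <= D)%VS.
Proof.
elim: s => [|E s IHs] sD /=; first exact: sub1v.
apply: prodv_sub; first by apply: sD; rewrite mem_head.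
by apply: IHs => X Xs; rewrite sD ?inE ?Xs ?orbT.
Qed.

Lemma compositum_map_prodv s F :
  s != [::] -> compositum [seq (E * F)%AS | E <- s] = (compositum s * F)%AS.
Proof.
elim: s => [|E s IHs] // _; apply: val_inj.
have [-> | s_nz] := eqVneq s [::]; first by rewrite /= !prodv1.
rewrite /= (IHs s_nz) /= prodvA [(E * F * _)%VS]prodvAC -prodvA.
by rewrite [(F * F)%VS]prodv_id.
Qed.

Lemma iso_over_K_dim L E : iso_over_K L E -> \dim E = \dim L.
Proof. by case=> f [homf <-]; rewrite (kHom_dim homf). Qed.

Lemma iso_over_K_sub_gal_closure L E : iso_over_K L E -> (E <= gal_closure L)%VS.
Proof.
case=> f [homf <-].
have sL : (1 <= L <= fullv)%VS by rewrite sub1v subvf.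
have [x galx fx] := kHom_to_gal sL (normalFieldf _) homf.
by rewrite (eq_in_limg fx); apply: sub_big_prodv (mem_index_enum x) galx.
Qed.

Lemma aspace_subv1 E : (E <= 1)%VS = (E == 1%AS).
Proof.
apply/idP/eqP => [sE1 | ->]; last exact: subvv.
by apply: val_inj; apply/eqP; rewrite /= eqEsubv sE1 sub1v.
Qed.

Lemma cluster_tower_subv s D :
  (forall E, E \in s -> (E <= D)%VS) -> {in cluster_tower s, forall C, (C <= D)%VS}.
Proof.
by move=> sD _ /mapP[i _ ->]; apply: compositum_subv => E /mem_take; apply: sD.
Qed.

End Compositum.

Section Magnification.

Variables (K : fieldType) (Om : splittingFieldType K) (F : {subfield Om}).
Implicit Types (C E N : {subfield Om}) (s : seq {subfield Om}).

(* Both cluster towers start at K, so K is sent to itself rather than to F. *)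
Definition magnify C : {subfield Om} := if C == 1%AS then 1%AS else (C * F)%AS.

Lemma magnify_eq1 C : (magnify C == 1%AS) = (C == 1%AS).
Proof.
rewrite /magnify; case: (C =P 1%AS) => [_ | /eqP C1]; first by rewrite eqxx.
apply/negbTE; apply: contra C1; rewrite -!aspace_subv1.
exact: subv_trans (field_subvMr C F).
Qed.

Lemma cluster_tower_map_prodv s :
  (forall E, E \in s -> E != 1%AS) ->
  cluster_tower [seq (E * F)%AS | E <- s] = map magnify (cluster_tower s).
Proof.
move=> s1; rewrite /cluster_tower size_map -map_comp; apply/eq_in_map => -[|i] _.
  by rewrite /= !take0 /magnify eqxx.
case: s s1 => [|E s] s1; first by rewrite /= /magnify eqxx.
have compo1 : compositum (take i.+1 (E :: s)) != 1%AS.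
  have := s1 E (mem_head E s); rewrite -!aspace_subv1; apply: contra.
  by apply: subv_trans; apply: subv_compositum; rewrite mem_head.
by rewrite -map_take compositum_map_prodv // /= /magnify (negbTE compo1).
Qed.

Hypotheses (galF : galois 1%VS F).

Lemma dim_magnify N C :
  (N :&: F)%VS = 1%VS -> (C <= N)%VS -> C != 1%AS ->
  (\dim (magnify C) = \dim F * \dim C)%N.
Proof.
move=> capNF sCN C1; rewrite /magnify (negbTE C1).
have capCF := disjoint_capvSl (sub1v C) (sub1v F) sCN capNF.
by have := dim_prodv_galois (sub1v C) galF capCF; rewrite dimv1 muln1 mulnC.
Qed.

Lemma magnify_inj N :
  (N :&: F)%VS = 1%VS ->
  {in [pred C : {subfield Om} | (C <= N)%VS] &, injective magnify}.
Proof.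
move=> capNF C1 C2; rewrite !inE => sC1N sC2N eq12.
have eq1 : (C1 == 1%AS) = (C2 == 1%AS) by rewrite -magnify_eq1 eq12 magnify_eq1.
move: eq12; rewrite /magnify -eq1.
case: (C1 =P 1%AS) eq1 => [-> eq1 _ | _ _ C12F]; first by apply/esym/eqP; rewrite -eq1.
apply/val_inj => /=; rewrite -(prodv_galois_capv (sub1v C1) sC1N galF capNF).
rewrite -(prodv_galois_capv (sub1v C2) sC2N galF capNF).
by rewrite -[(C1 * F)%VS]/(val (C1 * F)%AS) C12F.
Qed.

End Magnification.

Section Towers.

Variables (K : fieldType) (Om : splittingFieldType K).
Implicit Types (C : {subfield Om}) (g : {subfield Om} -> {subfield Om}).
Implicit Types (t : seq {subfield Om}).

Lemma tower_length_map_in g t :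
  {in t &, injective g} -> tower_length (map g t) = tower_length t.
Proof. by move=> g_inj; rewrite /tower_length undup_map_in // size_map. Qed.

Lemma degree_sequence_map_in g t d : (0 < d)%N ->
  {in t &, injective g} -> {in t, forall C, (g C == 1%AS) = (C == 1%AS)} ->
  (forall C, C \in t -> C != 1%AS -> (\dim (g C) = d * \dim C)%N) ->
  degree_sequence (map g t) = map (muln d) (degree_sequence t).
Proof.
move=> d_gt0 g_inj g1 dim_g; rewrite /degree_sequence undup_map_in // filter_map.
rewrite (@eq_in_filter _ _ (fun E => E != 1%AS)); last first.
  by move=> C; rewrite mem_undup => /g1 /= ->.
have d_mono : {mono muln d : m n / (m <= n)%N} by move=> m n; apply: leq_pmul2l.
rewrite (map_sort d_mono) -!map_comp; congr (sort _ _).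
by apply/eq_in_map => C; rewrite mem_filter mem_undup => /andP[C1 Ct]; apply: dim_g.
Qed.

End Towers.

Theorem mainTheorem7 (K : fieldType) (Om : splittingFieldType K)
    (L F M : {subfield Om}) (d : nat) (Ls : seq {subfield Om}) :
  perfect_field K ->
  strong_cluster_magnification L F M ->
  d = \dim F ->
  uniq Ls ->
  (forall E : {subfield Om}, E \in Ls <-> iso_over_K L E) ->
  let t1 := cluster_tower Ls in
  let t2 := cluster_tower [seq (E * F)%AS | E <- Ls] in
  (forall l : nat, tower_length t1 = l <-> tower_length t2 = l) /\
  degree_sequence t2 = [seq d * a | a <- degree_sequence t1].
Proof.
move=> _ [dimL galF capNF _] -> _ isoLs t1 t2.
have capNFv : (gal_closure L :&: F)%VS = 1%VS := congr1 val capNF.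
have LsN E : E \in Ls -> (E <= gal_closure L)%VS.
  by move/isoLs; apply: iso_over_K_sub_gal_closure.
have Ls1 E : E \in Ls -> E != 1%AS.
  move/isoLs/iso_over_K_dim => dimE; apply: contraTneq dimL => E1.
  by rewrite -dimE E1 dimv1.
have t1N := cluster_tower_subv LsN.
have g_inj : {in t1 &, injective (magnify F)}.
  by move=> C1 C2 /t1N sC1 /t1N sC2; apply: (magnify_inj galF capNFv).
rewrite /t2 (cluster_tower_map_prodv F Ls1); split=> [l|].
  by rewrite tower_length_map_in.
apply: degree_sequence_map_in g_inj _ _ => [|C _|C /t1N sCN C1].
- exact: adim_gt0.
- exact: magnify_eq1.
- by rewrite (dim_magnify galF capNFv sCN C1).
Qed.
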